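(* Let $1\le m<n$. (a) If $m=1$, then for every $A\in\mathbb R^{1\times n}$ and all $0<p,q\le\infty$: $\mathrm{pginv}_{\mathrm{col}(p,q)}(A)=\mathrm{ginv}_p(A)$; consequently there is a full-rank $A_1\in\mathbb R^{1\times n}$ with $A_1^\dagger\in\mathrm{pginv}_{\mathrm{col}(p,q)}(A_1)\iff p=2$ for $0<p<\infty$, $0<q\le\infty$. (b) If $m\ge 2$, there exists a full-rank $A_4\in\mathbb R^{m\times n}$ such that for all $1\le p<\infty$ and $0<q<\infty$: $A_4^\dagger\in\mathrm{pginv}_{\mathrm{col}(p,q)}(A_4)\iff p=2$.
   Context: Generalized inverses are taken real: $\mathcal G(A)=\{X\in\mathbb R^{n\times m}:AX=I_m\}$, $\mathrm{ginv}_\nu(A)=\arg\min_{X\in\mathcal G(A)}\|X\|_\nu$, $\mathrm{pginv}_\mu(A)=\arg\min_{X\in\mathcal G(A)}\|XA\|_\mu$ (sets). For $M$ with columns $m_j$, $\|M\|_{\mathrm{col}(p,q)}=(\sum_j\|m_j\|_p^q)^{1/q}$ (maximum for $q=\infty$); entrywise $\|M\|_p=\|\mathrm{vec}(M)\|_p$. $A^\dagger=A^\top(AA^\top)^{-1}$. *)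

From Stdlib Require Import Reals ClassicalEpsilon.
Open Scope R_scope.

(* Matrices are represented as functions nat -> nat -> R; only the entries
   with indices below the stated dimensions are ever used. *)
Definition Mat := nat -> nat -> R.

Inductive Ext := Fin (p : R) | Inf.
Definition ext_pos (e : Ext) : Prop :=
  match e with Fin p => 0 < p | Inf => True end.

Fixpoint sumR (n : nat) (f : nat -> R) : R :=
  match n with O => 0 | S k => sumR k f + f k end.
Fixpoint maxR (n : nat) (f : nat -> R) : R :=
  match n with O => 0 | S k => Rmax (maxR k f) (f k) end.

(* x^y for x >= 0, with 0^y = 0 (y > 0 in all uses). *)
Definition rpow (x y : R) : R :=
  if Rlt_dec 0 x then Rpower x y else 0.

Definition vnorm (e : Ext) (n : nat) (v : nat -> R) : R :=
  match e with
  | Fin p => rpow (sumR n (fun i => rpow (Rabs (v i)) p)) (/ p)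
  | Inf => maxR n (fun i => Rabs (v i))
  end.

Definition vecM (r : nat) (M : Mat) : nat -> R :=
  fun k => M (Nat.modulo k r) (Nat.div k r).

Definition enorm (e : Ext) (r c : nat) (M : Mat) : R := vnorm e (r * c) (vecM r M).

Definition colnorm (p q : Ext) (r c : nat) (M : Mat) : R :=
  vnorm q c (fun j => vnorm p r (fun i => M i j)).

Definition mmul (k : nat) (A B : Mat) : Mat :=
  fun i j => sumR k (fun l => A i l * B l j).
Definition ident : Mat := fun i j => if Nat.eqb i j then 1 else 0.
Definition trM (A : Mat) : Mat := fun i j => A j i.

Definition is_ginv (m n : nat) (A X : Mat) : Prop :=
  forall i j, (i < m)%nat -> (j < m)%nat -> mmul n A X i j = ident i j.

Definition ginv (nu : Ext) (m n : nat) (A X : Mat) : Prop :=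
  is_ginv m n A X /\
  forall Y, is_ginv m n A Y -> enorm nu n m X <= enorm nu n m Y.

Definition pginv_col (p q : Ext) (m n : nat) (A X : Mat) : Prop :=
  is_ginv m n A X /\
  forall Y, is_ginv m n A Y ->
    colnorm p q n n (mmul m X A) <= colnorm p q n n (mmul m Y A).

(* full rank for m <= n: rows linearly independent (rank = m) *)
Definition full_rank (m n : nat) (A : Mat) : Prop :=
  forall c : nat -> R,
    (forall j, (j < n)%nat -> sumR m (fun i => c i * A i j) = 0) ->
    forall i, (i < m)%nat -> c i = 0.

(* matrix inverse of a k x k matrix (a chosen two-sided inverse, if any) *)
Definition is_inv (k : nat) (M Y : Mat) : Prop :=
  forall i j, (i < k)%nat -> (j < k)%nat ->
    mmul k M Y i j = ident i j /\ mmul k Y M i j = ident i j.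
Definition minv (k : nat) (M : Mat) : Mat :=
  epsilon (inhabits (fun _ _ => 0)) (is_inv k M).

Definition pinv (m n : nat) (A : Mat) : Mat :=
  mmul m (trM A) (minv m (mmul n A (trM A))).

(* For a single row a, every X a = x a^T has rank one, so its col(p,q) norm is
   ||x||_p ||a||_q and minimizing it over G(a) is minimizing ||x||_p.

   The example matrix A has rows e_0 + 2 e_1, e_2, ..., e_m, and
   A^dagger = [(e_0 + 2 e_1)/5, e_2, ..., e_m]. For X in G(A) the columns of X A
   are x_0, 2 x_0, x_1, ..., x_(m-1), 0, ..., 0, where A X = I forces
   X_(i+1,i) = 1 for i >= 1 and X_(0,0) + 2 X_(1,0) = 1; the remaining columns of
   A^dagger are unit vectors and hence never worse. So A^dagger is optimal, for
   either criterion, exactly when (1/5, 2/5) minimizes |y_0|^p + |y_1|^p on the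
   line y_0 + 2 y_1 = 1. For p = 2 this is 5 (y_0^2 + y_1^2) = 1 + (2 y_0 - y_1)^2;
   for p <> 2 the derivative of this function along the line does not vanish at
   (1/5, 2/5), so A^dagger can be strictly improved. *)

From Stdlib Require Import Reals Lra Lia ClassicalEpsilon FunctionalExtensionality.
Open Scope R_scope.

Lemma rpow_ge0 x y : 0 <= rpow x y.
Proof. unfold rpow; destruct (Rlt_dec 0 x); [left; apply exp_pos | lra]. Qed.

Lemma rpow_gt0 x y : 0 < x -> 0 < rpow x y.
Proof. intros Hx; unfold rpow; destruct (Rlt_dec 0 x); [apply exp_pos | lra]. Qed.

Lemma rpow_0 y : rpow 0 y = 0.
Proof. unfold rpow; destruct (Rlt_dec 0 0); lra. Qed.

Lemma rpow_pos x y : 0 < x -> rpow x y = Rpower x y.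
Proof. intros Hx; unfold rpow; destruct (Rlt_dec 0 x); lra. Qed.

Lemma rpow_mult a b y : 0 <= a -> 0 <= b -> rpow (a * b) y = rpow a y * rpow b y.
Proof.
  intros [Ha | <-] [Hb | <-]; rewrite ?Rmult_0_l, ?Rmult_0_r, ?rpow_0; try ring.
  rewrite !rpow_pos by nra. symmetry; apply Rpower_mult_distr; assumption.
Qed.

Lemma rpow_rpow_inv a p : 0 <= a -> p <> 0 -> rpow (rpow a p) (/ p) = a.
Proof.
  intros [Ha | <-] Hp; [|now rewrite !rpow_0].
  rewrite (rpow_pos a), rpow_pos by (try apply exp_pos; assumption).
  rewrite Rpower_mult, Rinv_r by assumption. apply Rpower_1; assumption.
Qed.

Lemma rpow_le a b y : 0 < y -> 0 <= a <= b -> rpow a y <= rpow b y.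
Proof.
  intros Hy [[Ha | <-] Hab]; [|rewrite rpow_0; apply rpow_ge0].
  rewrite !rpow_pos by lra. apply Rle_Rpower_l; lra.
Qed.

Lemma rpow_lt a b y : 0 < y -> 0 <= a < b -> rpow a y < rpow b y.
Proof.
  intros Hy [[Ha | <-] Hab]; [|rewrite rpow_0; apply rpow_gt0; lra].
  rewrite !rpow_pos by lra. apply Rlt_Rpower_l; lra.
Qed.

Lemma rpow_abs_2 x : rpow (Rabs x) 2 = x * x.
Proof.
  destruct (Req_dec x 0) as [-> | Hx]; [rewrite Rabs_R0, rpow_0; ring|].
  rewrite rpow_pos by (apply Rabs_pos_lt; assumption).
  replace 2 with (INR 2) by (simpl; ring).
  rewrite Rpower_pow by (apply Rabs_pos_lt; assumption).
  simpl; rewrite Rmult_1_r, <- Rabs_mult. apply Rabs_pos_eq; nra.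
Qed.

Lemma sumR_ext n f g : (forall k, (k < n)%nat -> f k = g k) -> sumR n f = sumR n g.
Proof.
  induction n; intros H; simpl; [reflexivity|].
  rewrite IHn by (intros; apply H; lia). rewrite H by lia. reflexivity.
Qed.

Lemma sumR_le n f g : (forall k, (k < n)%nat -> f k <= g k) -> sumR n f <= sumR n g.
Proof. induction n; intros H; simpl; [lra|]. apply Rplus_le_compat; [apply IHn; intros|]; apply H; lia. Qed.

Lemma sumR_lt n f g a : (a < n)%nat -> (forall k, (k < n)%nat -> f k <= g k) ->
  f a < g a -> sumR n f < sumR n g.
Proof.
  induction n; intros Ha H Hlt; simpl; [lia|].
  destruct (Nat.eq_dec a n) as [-> | Hne].
  - apply Rplus_le_lt_compat; [apply sumR_le; intros; apply H; lia | assumption].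
  - apply Rplus_lt_le_compat; [apply IHn; [lia | intros; apply H; lia | assumption] | apply H; lia].
Qed.

Lemma sumR_ge0 n f : (forall k, (k < n)%nat -> 0 <= f k) -> 0 <= sumR n f.
Proof.
  induction n; intros H; simpl; [lra|].
  apply Rplus_le_le_0_compat; [apply IHn; intros|]; apply H; lia.
Qed.

Lemma sumR_zero n f : (forall k, (k < n)%nat -> f k = 0) -> sumR n f = 0.
Proof. intros H. rewrite (sumR_ext n f (fun _ => 0)) by assumption. clear H; induction n; simpl; lra. Qed.

Lemma sumR_scal n c f : sumR n (fun k => c * f k) = c * sumR n f.
Proof. induction n; simpl; [|rewrite IHn]; ring. Qed.

Lemma sumR_single n f a : (a < n)%nat ->
  (forall k, (k < n)%nat -> k <> a -> f k = 0) -> sumR n f = f a.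
Proof.
  induction n; intros Ha H; simpl; [lia|].
  destruct (Nat.eq_dec a n) as [-> | Hne].
  - rewrite sumR_zero; [ring|]. intros; apply H; lia.
  - rewrite IHn, (H n) by (try lia; intros; apply H; lia). ring.
Qed.

Lemma sumR_two n f : (2 <= n)%nat ->
  (forall k, (2 <= k < n)%nat -> f k = 0) -> sumR n f = f 0%nat + f 1%nat.
Proof.
  induction n as [|n IHn]; intros Hn H; [lia|].
  destruct (Nat.eq_dec n 1) as [-> | Hne]; simpl; [ring|].
  rewrite IHn, (H n) by (try lia; intros; apply H; lia). ring.
Qed.

Lemma sumR_ge_term n f a : (a < n)%nat -> (forall k, (k < n)%nat -> 0 <= f k) -> f a <= sumR n f.
Proof.
  intros Ha H. apply Rle_trans with (sumR n (fun k => if Nat.eqb k a then f k else 0)).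
  - rewrite (sumR_single _ _ a Ha), Nat.eqb_refl; [lra|].
    intros k _ Hk. apply Nat.eqb_neq in Hk. rewrite Hk; reflexivity.
  - apply sumR_le; intros k Hk. destruct (Nat.eqb k a); [lra | apply H; assumption].
Qed.

Lemma sumR_nonzero n f : sumR n f <> 0 -> exists k, (k < n)%nat /\ f k <> 0.
Proof.
  intros H. apply NNPP; intros Hall. apply H, sumR_zero. intros k Hk.
  apply NNPP; intros Hfk. apply Hall; exists k; split; assumption.
Qed.

Lemma maxR_ext n f g : (forall k, (k < n)%nat -> f k = g k) -> maxR n f = maxR n g.
Proof.
  induction n; intros H; simpl; [reflexivity|].
  rewrite IHn by (intros; apply H; lia). rewrite H by lia. reflexivity.
Qed.

Lemma maxR_le n f g : (forall k, (k < n)%nat -> f k <= g k) -> maxR n f <= maxR n g.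
Proof.
  induction n; intros H; simpl; [lra|].
  apply Rle_trans with (Rmax (maxR n g) (f n)).
  - apply Rle_max_compat_r, IHn; intros; apply H; lia.
  - apply Rle_max_compat_l, H; lia.
Qed.

Lemma maxR_scal n c f : 0 <= c -> maxR n (fun k => c * f k) = c * maxR n f.
Proof. intros Hc. induction n; simpl; [ring|]. rewrite IHn. apply RmaxRmult; assumption. Qed.

Lemma maxR_ge_term n f a : (a < n)%nat -> f a <= maxR n f.
Proof.
  induction n; intros Ha; simpl; [lia|].
  destruct (Nat.eq_dec a n) as [-> | Hne]; [apply Rmax_r|].
  apply Rle_trans with (maxR n f); [apply IHn; lia | apply Rmax_l].
Qed.

Definition col (j : nat) (X : Mat) : nat -> R := fun k => X k j.

Definition psum (p : R) (n : nat) (v : nat -> R) : R := sumR n (fun k => rpow (Rabs (v k)) p).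

Lemma vnorm_Fin p n v : vnorm (Fin p) n v = rpow (psum p n v) (/ p).
Proof. reflexivity. Qed.

Lemma psum_ge0 p n v : 0 <= psum p n v.
Proof. apply sumR_ge0; intros; apply rpow_ge0. Qed.

Lemma vnorm_ext e n u v : (forall k, (k < n)%nat -> u k = v k) -> vnorm e n u = vnorm e n v.
Proof.
  intros H; destruct e; simpl.
  - f_equal; apply sumR_ext; intros; rewrite H by assumption; reflexivity.
  - apply maxR_ext; intros; rewrite H by assumption; reflexivity.
Qed.

Lemma vnorm_ge0 e n v : ext_pos e -> 0 <= vnorm e n v.
Proof.
  destruct e; simpl; intros _; [apply rpow_ge0|].
  induction n; simpl; [lra|].
  apply Rle_trans with (maxR n (fun i => Rabs (v i))); [assumption | apply Rmax_l].
Qed.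

Lemma vnorm_pos e n v k : (k < n)%nat -> v k <> 0 -> 0 < vnorm e n v.
Proof.
  intros Hk Hv; apply Rabs_pos_lt in Hv; destruct e; simpl.
  - apply rpow_gt0, Rlt_le_trans with (rpow (Rabs (v k)) p); [apply rpow_gt0; assumption|].
    apply (sumR_ge_term _ (fun i => rpow (Rabs (v i)) p)); [assumption | intros; apply rpow_ge0].
  - apply Rlt_le_trans with (Rabs (v k)); [assumption | apply (maxR_ge_term _ (fun i => Rabs (v i)) k Hk)].
Qed.

Lemma vnorm_scal e n c v : ext_pos e -> vnorm e n (fun k => c * v k) = Rabs c * vnorm e n v.
Proof.
  destruct e as [p|]; simpl; intros Hp.
  - rewrite (sumR_ext _ _ (fun k => rpow (Rabs c) p * rpow (Rabs (v k)) p))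
      by (intros; rewrite Rabs_mult, rpow_mult by apply Rabs_pos; reflexivity).
    rewrite sumR_scal, rpow_mult, rpow_rpow_inv by (apply Rabs_pos || apply rpow_ge0 || lra
      || (apply sumR_ge0; intros; apply rpow_ge0)).
    reflexivity.
  - rewrite (maxR_ext _ _ (fun k => Rabs c * Rabs (v k))) by (intros; apply Rabs_mult).
    apply maxR_scal, Rabs_pos.
Qed.

Lemma vnorm_abs e n v : vnorm e n (fun k => Rabs (v k)) = vnorm e n v.
Proof.
  destruct e; simpl; [f_equal; apply sumR_ext | apply maxR_ext];
    intros; rewrite Rabs_Rabsolu; reflexivity.
Qed.

Lemma vnorm_le e n u v : ext_pos e ->
  (forall k, (k < n)%nat -> Rabs (u k) <= Rabs (v k)) -> vnorm e n u <= vnorm e n v.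
Proof.
  destruct e as [p|]; simpl; intros Hp H; [|apply maxR_le; assumption].
  apply rpow_le; [apply Rinv_0_lt_compat; assumption|]. split; [apply psum_ge0|].
  apply sumR_le; intros k Hk. apply rpow_le; [assumption|]. split; [apply Rabs_pos | apply H; assumption].
Qed.

Lemma vnorm_Fin_lt p n u v a : 0 < p -> (a < n)%nat ->
  (forall k, (k < n)%nat -> Rabs (u k) <= Rabs (v k)) -> Rabs (u a) < Rabs (v a) ->
  vnorm (Fin p) n u < vnorm (Fin p) n v.
Proof.
  intros Hp Ha H Hlt. apply rpow_lt; [apply Rinv_0_lt_compat; assumption|]. split; [apply psum_ge0|].
  apply (sumR_lt _ _ _ a Ha).
  - intros k Hk. apply rpow_le; [assumption|]. split; [apply Rabs_pos | apply H; assumption].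
  - apply rpow_lt; [assumption|]. split; [apply Rabs_pos | assumption].
Qed.

Lemma enorm_col e n X : enorm e n 1 X = vnorm e n (col 0 X).
Proof.
  unfold enorm; rewrite Nat.mul_1_r. apply vnorm_ext; intros k Hk.
  unfold vecM, col. rewrite Nat.mod_small, Nat.div_small by assumption. reflexivity.
Qed.

Lemma colnorm_mul_row p q n (Y A : Mat) : ext_pos p -> ext_pos q ->
  colnorm p q n n (mmul 1 Y A) = vnorm p n (col 0 Y) * vnorm q n (A 0%nat).
Proof.
  intros Hp Hq. unfold colnorm.
  rewrite (vnorm_ext q n _ (fun j => vnorm p n (col 0 Y) * Rabs (A 0%nat j))).
  - rewrite vnorm_scal, vnorm_abs, Rabs_pos_eq by (apply vnorm_ge0 || idtac; assumption). reflexivity.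
  - intros j _. rewrite (vnorm_ext p n _ (fun k => A 0%nat j * col 0 Y k))
      by (intros; unfold mmul, col; simpl; ring).
    rewrite vnorm_scal by assumption. ring.
Qed.

Lemma vnorm_row_pos e n (A Y : Mat) : is_ginv 1 n A Y -> 0 < vnorm e n (A 0%nat).
Proof.
  intros HY. specialize (HY 0%nat 0%nat ltac:(lia) ltac:(lia)).
  unfold mmul, ident in HY; simpl in HY.
  destruct (sumR_nonzero n (fun l => A 0%nat l * Y l 0%nat)) as [l [Hl Hnz]]; [rewrite HY; lra|].
  apply (vnorm_pos _ _ _ l Hl). intros H0; apply Hnz; rewrite H0; ring.
Qed.

Lemma pginv_col_row_iff_ginv n (A : Mat) p q : ext_pos p -> ext_pos q ->
  forall X, pginv_col p q 1 n A X <-> ginv p 1 n A X.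
Proof.
  intros Hp Hq X. unfold pginv_col, ginv.
  split; intros [HX Hopt]; split; try assumption; intros Y HY; specialize (Hopt Y HY);
    rewrite !colnorm_mul_row, !enorm_col in * by assumption;
    pose proof (vnorm_row_pos q n A X HX).
  - apply Rmult_le_reg_r in Hopt; assumption.
  - apply Rmult_le_compat_r; lra.
Qed.

Lemma pginv_col_ext p q m n (A X X' : Mat) : (forall k i, (i < m)%nat -> X k i = X' k i) ->
  pginv_col p q m n A X <-> pginv_col p q m n A X'.
Proof.
  intros H.
  assert (HXA : mmul m X A = mmul m X' A).
  { apply functional_extensionality; intros k; apply functional_extensionality; intros j.
    apply sumR_ext; intros; rewrite H by assumption; reflexivity. }
  assert (HAX : forall i j, (j < m)%nat -> mmul n A X i j = mmul n A X' i j).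
  { intros; apply sumR_ext; intros; rewrite H by assumption; reflexivity. }
  unfold pginv_col, is_ginv. rewrite HXA.
  split; intros [HX Hopt]; split; try assumption; intros i j Hi Hj;
    [rewrite <- HAX | rewrite HAX]; auto.
Qed.

Lemma minv_diag k (M : Mat) (d : nat -> R) :
  (forall i, (i < k)%nat -> d i <> 0) ->
  (forall i j, (i < k)%nat -> (j < k)%nat -> M i j = if Nat.eqb i j then d i else 0) ->
  forall i j, (i < k)%nat -> (j < k)%nat -> minv k M i j = if Nat.eqb i j then / d i else 0.
Proof.
  intros Hd HM.
  assert (Hinv : exists Y, is_inv k M Y).
  { exists (fun i j => if Nat.eqb i j then / d i else 0). intros i j Hi Hj. unfold mmul, ident.
    split.
    - rewrite (sumR_single _ _ i Hi) by (intros l Hl Hli; rewrite HM by assumption;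
        apply Nat.eqb_neq in Hli; rewrite (Nat.eqb_sym i l), Hli; ring).
      rewrite HM, Nat.eqb_refl by assumption. destruct (Nat.eqb i j); [field; auto | ring].
    - rewrite (sumR_single _ _ i Hi) by (intros l Hl Hli;
        apply Nat.eqb_neq in Hli; rewrite (Nat.eqb_sym i l), Hli; ring).
      rewrite HM, Nat.eqb_refl by assumption. destruct (Nat.eqb i j); [field; auto | ring]. }
  intros i j Hi Hj.
  destruct (epsilon_spec (inhabits (fun _ _ => 0)) (is_inv k M) Hinv i j Hi Hj) as [_ HYM].
  fold (minv k M) in HYM. unfold mmul, ident in HYM.
  rewrite (sumR_single _ _ j Hj) in HYM
    by (intros l Hl Hlj; rewrite HM by assumption; apply Nat.eqb_neq in Hlj; rewrite Hlj; ring).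
  rewrite HM, Nat.eqb_refl in HYM by assumption.
  specialize (Hd j Hj). destruct (Nat.eqb_spec i j) as [-> | _].
  - apply (Rmult_eq_reg_r (d j)); [rewrite HYM; field|]; assumption.
  - apply Rmult_integral in HYM as [|]; [assumption | contradiction].
Qed.


Lemma derivable_pt_lim_descent f x l : derivable_pt_lim f x l -> l <> 0 ->
  forall r, 0 < r -> exists h, Rabs h < r /\ f (x + h) < f x.
Proof.
  intros Hd Hl r Hr.
  assert (Heps : 0 < Rabs l / 2) by (apply Rabs_pos_lt in Hl; lra).
  destruct (Hd _ Heps) as [[d Hd0] Hquot]; simpl in Hquot.
  set (t := Rmin d r / 2).
  assert (Ht : 0 < t /\ t < d /\ t < r).
  { unfold t; pose proof (Rmin_l d r); pose proof (Rmin_r d r);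
      pose proof (Rmin_glb_lt d r 0 Hd0 Hr); lra. }
  (* the difference quotient has the sign of l, so step against it *)
  assert (Hsign : 0 < l \/ l < 0) by (destruct (Rtotal_order l 0) as [| [|]]; tauto).
  destruct Hsign as [Hl0 | Hl0]; [exists (-t) | exists t];
    rewrite ?Rabs_Ropp, Rabs_pos_eq by lra; split; try lra;
    [specialize (Hquot (-t)) | specialize (Hquot t)];
    rewrite ?Rabs_Ropp, Rabs_pos_eq in Hquot by lra; apply Rabs_def2 in Hquot; try lra;
    [rewrite Rabs_pos_eq in Hquot by lra | rewrite Rabs_left in Hquot by lra];
    match goal with |- f (x + ?h) < f x =>
      assert (Hfac : f (x + h) - f x = h * ((f (x + h) - f x) / h)) by (field; lra);
      set (q := (f (x + h) - f x) / h) in * end;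
    destruct Hquot, Ht as [? [? ?]]; nra.
Qed.

Definition psum2 (p y0 y1 : R) : R := rpow (Rabs y0) p + rpow (Rabs y1) p.

Definition line_min (p : R) : Prop :=
  forall y0 y1, y0 + 2 * y1 = 1 -> psum2 p (/ 5) (2 / 5) <= psum2 p y0 y1.

Lemma line_min_2 : line_min 2.
Proof.
  intros y0 y1 Hy. unfold psum2; rewrite !rpow_abs_2.
  assert (H5 : 5 * (y0 * y0 + y1 * y1) = (y0 + 2 * y1) * (y0 + 2 * y1) + (2 * y0 - y1) * (2 * y0 - y1))
    by ring.
  rewrite Hy in H5. pose proof (Rle_0_sqr (2 * y0 - y1)). unfold Rsqr in *. lra.
Qed.

Lemma not_line_min p : 0 < p -> p <> 2 -> ~ line_min p.
Proof.
  intros Hp Hp2 Hmin.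
  set (f := fun s => Rpower (/ 5 + 2 * s) p + Rpower (2 / 5 + -1 * s) p).
  set (l := p * Rpower (/ 5) (p - 1) * 2 + p * Rpower (2 / 5) (p - 1) * -1).
  assert (Hd : derivable_pt_lim f 0 l).
  { apply derivable_pt_lim_plus;
      match goal with |- derivable_pt_lim _ 0 (p * Rpower ?a (p - 1) * ?c) =>
        replace (p * Rpower a (p - 1) * c) with (p * Rpower (a + c * 0) (p - 1) * (0 + c * 1))
          by (rewrite Rmult_0_r, Rplus_0_r; ring);
        apply (derivable_pt_lim_comp (fun s => a + c * s) (fun y => Rpower y p));
        [ apply derivable_pt_lim_plus;
            [apply derivable_pt_lim_const | apply derivable_pt_lim_scal, derivable_pt_lim_id]
        | apply derivable_pt_lim_power; lra ] end. }
  (* l = p 5^(1-p) (2 - 2^(p-1)), which vanishes only at p = 2 *)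
  assert (Hl : l <> 0).
  { unfold l; intros Hl0.
    replace (2 / 5) with (2 * / 5) in Hl0 by (unfold Rdiv; ring).
    rewrite <- Rpower_mult_distr in Hl0 by lra.
    assert (H5 : 0 < Rpower (/ 5) (p - 1)) by apply exp_pos.
    assert (H2 : Rpower 2 (p - 1) = Rpower 2 1).
    { rewrite Rpower_1 by lra. apply (Rmult_eq_reg_l (p * Rpower (/ 5) (p - 1))); nra. }
    apply exp_inv in H2.
    assert (0 < ln 2) by (rewrite <- ln_1; apply ln_increasing; lra).
    apply Rmult_eq_reg_r in H2; lra. }
  destruct (derivable_pt_lim_descent f 0 l Hd Hl (/ 10)) as [h [Hh Hfh]]; [lra|].
  apply Rabs_def2 in Hh as [Hh1 Hh2].
  specialize (Hmin (/ 5 + 2 * h) (2 / 5 + -1 * h) ltac:(field)).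
  unfold f, psum2 in *. rewrite !Rplus_0_l, !Rmult_0_r, !Rplus_0_r in Hfh.
  rewrite !Rabs_pos_eq, !rpow_pos in Hmin by lra. lra.
Qed.

Lemma line_min_iff p : 0 < p -> line_min p <-> p = 2.
Proof.
  intros Hp; split; [|intros ->; exact line_min_2].
  intros Hmin. apply NNPP; intros Hp2. exact (not_line_min p Hp Hp2 Hmin).
Qed.

Definition exA : Mat := fun i j =>
  if Nat.eqb i 0 then (if Nat.eqb j 0 then 1 else if Nat.eqb j 1 then 2 else 0)
  else if Nat.eqb j (S i) then 1 else 0.

Definition exG (y0 y1 : R) : Mat := fun k i =>
  if Nat.eqb i 0 then (if Nat.eqb k 0 then y0 else if Nat.eqb k 1 then y1 else 0)
  else if Nat.eqb k (S i) then 1 else 0.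

Definition exX : Mat := exG (/ 5) (2 / 5).

Ltac destruct_eqb :=
  repeat match goal with |- context [Nat.eqb ?a ?b] => destruct (Nat.eqb_spec a b) end;
  subst; try lia; try ring.

Section Example.
Variables (m n : nat) (Hm : (1 <= m)%nat) (Hmn : (m < n)%nat).

Lemma mul_exA_l X i j : (i < m)%nat ->
  mmul n exA X i j = if Nat.eqb i 0 then X 0%nat j + 2 * X 1%nat j else X (S i) j.
Proof.
  intros Hi. unfold mmul. destruct (Nat.eqb_spec i 0) as [-> | Hi0].
  - rewrite sumR_two by (try lia; intros; unfold exA; destruct_eqb). unfold exA; simpl; ring.
  - rewrite (sumR_single _ _ (S i)) by (try lia; intros; unfold exA; destruct_eqb).
    unfold exA; destruct_eqb.
Qed.

Definition exA_weight (j : nat) : R :=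
  if Nat.eqb j 0 then 1 else if Nat.eqb j 1 then 2 else if Nat.leb j m then 1 else 0.

Lemma mul_exA_r X k j : mmul m X exA k j = exA_weight j * X k (pred j).
Proof.
  unfold mmul, exA_weight. destruct (Nat.eqb_spec j 0) as [-> | Hj0].
  { rewrite (sumR_single _ _ 0) by (try lia; intros; unfold exA; destruct_eqb). unfold exA; simpl; ring. }
  destruct (Nat.eqb_spec j 1) as [-> | Hj1].
  { rewrite (sumR_single _ _ 0) by (try lia; intros; unfold exA; destruct_eqb). unfold exA; simpl; ring. }
  destruct (Nat.leb_spec j m).
  - rewrite (sumR_single _ _ (pred j)) by (try lia; intros; unfold exA; destruct_eqb).
    unfold exA; destruct_eqb.
  - rewrite Rmult_0_l. apply sumR_zero; intros; unfold exA; destruct_eqb.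
Qed.

Lemma exA_weight_beyond j : (m <= pred j)%nat -> exA_weight j = 0.
Proof. intros Hj. unfold exA_weight. destruct_eqb. destruct (Nat.leb_spec j m); lia || reflexivity. Qed.

Lemma exA_full_rank : full_rank m n exA.
Proof.
  intros c Hc i Hi. destruct (Nat.eqb_spec i 0) as [-> | Hi0].
  - specialize (Hc 0%nat ltac:(lia)).
    rewrite (sumR_single _ _ 0) in Hc by (try lia; intros; unfold exA; destruct_eqb).
    unfold exA in Hc; simpl in Hc. lra.
  - specialize (Hc (S i) ltac:(lia)).
    rewrite (sumR_single _ _ i) in Hc by (try lia; intros; unfold exA; destruct_eqb).
    unfold exA in Hc. revert Hc; destruct_eqb; lra.
Qed.

Lemma exG_ginv y0 y1 : y0 + 2 * y1 = 1 -> is_ginv m n exA (exG y0 y1).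
Proof. intros Hy i j Hi Hj. rewrite mul_exA_l by assumption. unfold exG, ident. destruct_eqb; lra. Qed.

Lemma ginv_exA_line Y : is_ginv m n exA Y -> Y 0%nat 0%nat + 2 * Y 1%nat 0%nat = 1.
Proof.
  intros HY. specialize (HY 0%nat 0%nat ltac:(lia) ltac:(lia)).
  rewrite mul_exA_l in HY by lia. exact HY.
Qed.

Lemma ginv_exA_diag Y i : is_ginv m n exA Y -> (1 <= i < m)%nat -> Y (S i) i = 1.
Proof.
  intros HY Hi. specialize (HY i i ltac:(lia) ltac:(lia)).
  rewrite mul_exA_l in HY by lia. unfold ident in HY. revert HY; destruct_eqb; auto.
Qed.

Lemma pinv_exA k i : (i < m)%nat -> pinv m n exA k i = exX k i.
Proof.
  intros Hi. set (d := fun i : nat => if Nat.eqb i 0 then 5 else 1).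
  assert (HAAT : forall i j, (i < m)%nat -> (j < m)%nat ->
            mmul n exA (trM exA) i j = if Nat.eqb i j then d i else 0).
  { intros i' j Hi' Hj. rewrite mul_exA_l by assumption. unfold trM, exA, d. destruct_eqb. }
  assert (Hd : forall i, (i < m)%nat -> d i <> 0) by (intros; unfold d; destruct_eqb; lra).
  pose proof (minv_diag m _ d Hd HAAT) as Hminv.
  unfold pinv, mmul at 1.
  rewrite (sumR_single _ _ i Hi) by (intros l Hl Hli; rewrite Hminv by assumption; destruct_eqb).
  rewrite Hminv by assumption. unfold trM, exA, exX, exG, d. destruct_eqb; field.
Qed.

Lemma colnorm_mul_exA p q X : ext_pos p ->
  colnorm p q n n (mmul m X exA) =
  vnorm q n (fun j => Rabs (exA_weight j) * vnorm p n (col (pred j) X)).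
Proof.
  intros Hp. apply vnorm_ext; intros j _. rewrite <- vnorm_scal by assumption.
  apply vnorm_ext; intros; apply mul_exA_r.
Qed.

Lemma weighted_col_le p X Y j : ext_pos p ->
  (forall i, (i < m)%nat -> vnorm p n (col i X) <= vnorm p n (col i Y)) ->
  Rabs (Rabs (exA_weight j) * vnorm p n (col (pred j) X)) <=
  Rabs (Rabs (exA_weight j) * vnorm p n (col (pred j) Y)).
Proof.
  intros Hp H.
  rewrite !Rabs_mult, Rabs_Rabsolu, !(Rabs_pos_eq (vnorm _ _ _)) by (apply vnorm_ge0; assumption).
  destruct (Nat.lt_ge_cases (pred j) m) as [Hjm | Hjm].
  - apply Rmult_le_compat_l; [apply Rabs_pos | apply H; assumption].
  - rewrite exA_weight_beyond, Rabs_R0 by assumption. lra.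
Qed.

Lemma colnorm_mul_exA_le p q X Y : ext_pos p -> ext_pos q ->
  (forall i, (i < m)%nat -> vnorm p n (col i X) <= vnorm p n (col i Y)) ->
  colnorm p q n n (mmul m X exA) <= colnorm p q n n (mmul m Y exA).
Proof.
  intros Hp Hq H. rewrite !colnorm_mul_exA by assumption.
  apply vnorm_le; [assumption|]. intros; apply weighted_col_le; assumption.
Qed.

Lemma colnorm_mul_exA_lt p q X Y : ext_pos p -> 0 < q ->
  (forall i, (i < m)%nat -> vnorm p n (col i X) <= vnorm p n (col i Y)) ->
  vnorm p n (col 0 X) < vnorm p n (col 0 Y) ->
  colnorm p (Fin q) n n (mmul m X exA) < colnorm p (Fin q) n n (mmul m Y exA).
Proof.
  intros Hp Hq H H0. rewrite !colnorm_mul_exA by assumption.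
  apply (vnorm_Fin_lt _ _ _ _ 0); [assumption | lia | intros; apply weighted_col_le; assumption |].
  unfold exA_weight; simpl. rewrite Rabs_R1, !Rmult_1_l, !Rabs_pos_eq by (apply vnorm_ge0; assumption).
  assumption.
Qed.

Lemma vnorm_col0_exG p y0 y1 : vnorm (Fin p) n (col 0 (exG y0 y1)) = rpow (psum2 p y0 y1) (/ p).
Proof.
  rewrite vnorm_Fin; f_equal. unfold psum.
  rewrite sumR_two by (try lia; intros; unfold col, exG; destruct_eqb; rewrite Rabs_R0; apply rpow_0).
  reflexivity.
Qed.

Lemma psum2_le_vnorm_col0 p Y : 0 < p ->
  rpow (psum2 p (Y 0%nat 0%nat) (Y 1%nat 0%nat)) (/ p) <= vnorm (Fin p) n (col 0 Y).
Proof.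
  intros Hp. rewrite vnorm_Fin. apply rpow_le; [apply Rinv_0_lt_compat; assumption|].
  split; [unfold psum2; pose proof (rpow_ge0 (Rabs (Y 0%nat 0%nat)) p);
          pose proof (rpow_ge0 (Rabs (Y 1%nat 0%nat)) p); lra|].
  apply Rle_trans with (sumR n (fun k => if Nat.ltb k 2 then rpow (Rabs (col 0 Y k)) p else 0)).
  - rewrite sumR_two by (lia || (intros k Hk; destruct (Nat.ltb_spec k 2); [lia | reflexivity])).
    apply Req_le; reflexivity.
  - apply sumR_le; intros k _. destruct (Nat.ltb k 2); [lra | apply rpow_ge0].
Qed.

Lemma col0_exX_le p Y : 0 < p -> line_min p -> is_ginv m n exA Y ->
  vnorm (Fin p) n (col 0 exX) <= vnorm (Fin p) n (col 0 Y).
Proof.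
  intros Hp Hmin HY. unfold exX; rewrite vnorm_col0_exG.
  apply Rle_trans with (2 := psum2_le_vnorm_col0 p Y Hp).
  apply rpow_le; [apply Rinv_0_lt_compat; assumption|]. split.
  - unfold psum2; pose proof (rpow_ge0 (Rabs (/ 5)) p); pose proof (rpow_ge0 (Rabs (2 / 5)) p); lra.
  - apply Hmin, ginv_exA_line; assumption.
Qed.

Lemma col0_exG_lt p y0 y1 : 0 < p -> psum2 p y0 y1 < psum2 p (/ 5) (2 / 5) ->
  vnorm (Fin p) n (col 0 (exG y0 y1)) < vnorm (Fin p) n (col 0 exX).
Proof.
  intros Hp Hlt. unfold exX; rewrite !vnorm_col0_exG.
  apply rpow_lt; [apply Rinv_0_lt_compat; assumption|]. split; [|assumption].
  unfold psum2; pose proof (rpow_ge0 (Rabs y0) p); pose proof (rpow_ge0 (Rabs y1) p); lra.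
Qed.

Lemma col_exX_le p Y i : ext_pos p -> is_ginv m n exA Y -> (1 <= i < m)%nat ->
  vnorm p n (col i exX) <= vnorm p n (col i Y).
Proof.
  intros Hp HY Hi. apply vnorm_le; [assumption|]. intros k _.
  destruct i as [|i]; [lia|]. unfold col, exX, exG; simpl.
  destruct (Nat.eqb_spec k (S (S i))) as [-> | _].
  - rewrite ginv_exA_diag by (assumption || lia). lra.
  - rewrite Rabs_R0. apply Rabs_pos.
Qed.

Lemma exX_pginv_col_iff p q : 0 < p -> 0 < q ->
  pginv_col (Fin p) (Fin q) m n exA exX <-> line_min p.
Proof.
  intros Hp Hq. split.
  - intros [_ Hopt] y0 y1 Hy. apply Rnot_lt_le; intros Hlt.
    assert (Hcol0 := col0_exG_lt p y0 y1 Hp Hlt).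
    specialize (Hopt _ (exG_ginv y0 y1 Hy)).
    enough (colnorm (Fin p) (Fin q) n n (mmul m (exG y0 y1) exA) <
            colnorm (Fin p) (Fin q) n n (mmul m exX exA)) by lra.
    apply colnorm_mul_exA_lt; try assumption.
    intros [|i] Hi; [apply Rlt_le, Hcol0 | apply Rle_refl].
  - intros Hmin. split; [apply exG_ginv; field|]. intros Y HY.
    apply colnorm_mul_exA_le; [assumption | assumption |].
    intros [|i] Hi; [apply col0_exX_le | apply col_exX_le; try lia]; assumption.
Qed.

End Example.

Lemma exX_ginv_row_iff n p : (1 < n)%nat -> 0 < p -> ginv (Fin p) 1 n exA exX <-> line_min p.
Proof.
  intros Hn Hp. unfold ginv. split.
  - intros [_ Hopt] y0 y1 Hy. apply Rnot_lt_le; intros Hlt.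
    specialize (Hopt _ (exG_ginv 1 n (le_n 1) Hn y0 y1 Hy)). rewrite !enorm_col in Hopt.
    pose proof (col0_exG_lt 1 n (le_n 1) Hn p y0 y1 Hp Hlt). lra.
  - intros Hmin. split; [apply exG_ginv; [lia | assumption | field]|]. intros Y HY.
    rewrite !enorm_col. apply (col0_exX_le 1 n (le_n 1) Hn); assumption.
Qed.

Theorem theorem4 (m n : nat) (Hm : (1 <= m)%nat) (Hmn : (m < n)%nat) :
  (m = 1%nat ->
     (forall (A : Mat) (p q : Ext), ext_pos p -> ext_pos q ->
        forall X : Mat, pginv_col p q m n A X <-> ginv p m n A X)
     /\
     (exists A1 : Mat, full_rank m n A1 /\
        forall (p : R) (q : Ext), 0 < p -> ext_pos q ->
          (pginv_col (Fin p) q m n A1 (pinv m n A1) <-> p = 2)))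
  /\
  ((2 <= m)%nat ->
     exists A4 : Mat, full_rank m n A4 /\
       forall p q : R, 1 <= p -> 0 < q ->
         (pginv_col (Fin p) (Fin q) m n A4 (pinv m n A4) <-> p = 2)).
Proof.
  split.
  - intros ->. split; [exact (pginv_col_row_iff_ginv n)|].
    exists exA. split; [exact (exA_full_rank 1 n Hm Hmn)|]. intros p q Hp Hq.
    rewrite (pginv_col_ext _ _ _ _ _ _ exX) by exact (pinv_exA 1 n Hm Hmn).
    rewrite pginv_col_row_iff_ginv, exX_ginv_row_iff by assumption.
    apply line_min_iff; assumption.
  - intros _. exists exA. split; [exact (exA_full_rank m n Hm Hmn)|]. intros p q Hp Hq.
    rewrite (pginv_col_ext _ _ _ _ _ _ exX) by exact (pinv_exA m n Hm Hmn).
    rewrite (exX_pginv_col_iff m n Hm Hmn) by lra.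
    apply line_min_iff; lra.
Qed.
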